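(* Let $h_1,\dots,h_r\in\mathbb{R}^n$, $b_1,\dots,b_r\in\mathbb{R}$, $V_1,\dots,V_s\in\mathbb{R}^{n\times n}$, $v_1,\dots,v_s\in\mathbb{R}$, and define the polyhedra $$S=\{x\in\mathbb{R}^n \mid h_i^Tx\le b_i,\ i=1,\dots,r\},\qquad U_0=\{A\in\mathbb{R}^{n\times n}\mid \mathrm{Tr}(V_j^TA)\le v_j,\ j=1,\dots,s\}.$$ Let $A_\star\in U_0$, let $x_1,\dots,x_m\in\mathbb{R}^n$, let $y_k=A_\star x_k$ for $k=1,\dots,m$, let $U_m=\{A\in U_0\mid Ax_k=y_k,\ k=1,\dots,m\}$ and let $c\in\mathbb{R}^n$. Consider the problem $$\text{(P)}\qquad \min_{x\in\mathbb{R}^n}\ c^Tx\quad \text{s.t. } x\in S,\quad Ax\in S\ \ \forall A\in U_m,$$ and the linear program, in the variables $x\in\mathbb{R}^n$, $\mu^{(i)}=(\mu^{(i)}_1,\dots,\mu^{(i)}_s)\in\mathbb{R}^s$ and $\eta_k^{(i)}\in\mathbb{R}^n$ ($i=1,\dots,r$, $k=1,\dots,m$), $$\text{(Q)}\qquad \begin{aligned}\min\quad & c^Tx\\ \text{s.t.}\quad & h_i^Tx\le b_i, && i=1,\dots,r,\\ & \textstyle\sum_{k=1}^m y_k^T\eta_k^{(i)}+\sum_{j=1}^s\mu_j^{(i)}v_j\le b_i, && i=1,\dots,r,\\ & \textstyle x h_i^T=\sum_{k=1}^m x_k\eta_k^{(i)T}+\sum_{j=1}^s \mu_j^{(i)}V_j^T,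 && i=1,\dots,r,\\ & \mu^{(i)}\ge 0, && i=1,\dots,r.\end{aligned}$$ Then the feasible set of (P) equals the projection onto $x$-space of the feasible set of (Q). In particular, the optimal values of (P) and (Q) are equal, and the optimal solutions of (P) are exactly the projections onto $x$-space of the optimal solutions of (Q).
   Context: Setting: an unknown linear dynamical system $x_{t+1}=A_\star x_t$ whose matrix $A_\star$ is known to lie in the polyhedral uncertainty set $U_0$; the measurements $(x_k,y_k)$ are the observed one-step transitions. Problem (P) asks for the cheapest point that stays in the safety region $S$ for one step under every matrix consistent with $U_0$ and the measurements. *)

From HB Require Import structures.
From mathcomp Require Import all_boot all_order all_algebra.
From mathcomp Require Import all_classical all_reals all_analysis.
Set Implicit Arguments. Unset Strict Implicit. Unset Printing Implicit Defensive.
Import Order.TTheory GRing.Theory Num.Theory.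
Local Open Scope ring_scope.
Local Open Scope classical_set_scope.

Section Defs.
Variable R : realType.
Variables n r s m : nat.

Definition dotv (u w : 'cV[R]_n) : R := (u^T *m w) 0 0.

Definition safe_set (h : 'I_r -> 'cV[R]_n) (b : 'I_r -> R) : set 'cV[R]_n :=
  [set x | forall i, dotv (h i) x <= b i].

Definition U0_set (V : 'I_s -> 'M[R]_n) (v : 'I_s -> R) : set 'M[R]_n :=
  [set A | forall j, \tr ((V j)^T *m A) <= v j].

Definition Um_set (V : 'I_s -> 'M[R]_n) (v : 'I_s -> R)
  (xs ys : 'I_m -> 'cV[R]_n) : set 'M[R]_n :=
  [set A | U0_set V v A /\ forall k, A *m xs k = ys k].

Definition feasP h b V v xs ys : set 'cV[R]_n :=
  [set x | safe_set h b x /\ forall A, Um_set V v xs ys A -> safe_set h b (A *m x)].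

(* decision variables of (Q): (x, (mu, eta)) with mu i j = mu^{(i)}_j
   and eta i k = eta^{(i)}_k *)
Definition Qvar := ('cV[R]_n * (('I_r -> 'I_s -> R) * ('I_r -> 'I_m -> 'cV[R]_n)))%type.

Definition feasQ (h : 'I_r -> 'cV[R]_n) (b : 'I_r -> R)
  (V : 'I_s -> 'M[R]_n) (v : 'I_s -> R) (xs ys : 'I_m -> 'cV[R]_n) : set Qvar :=
  [set z | let x := z.1 in let mu := z.2.1 in let eta := z.2.2 in
     (forall i, dotv (h i) x <= b i) /\
     (forall i, \sum_(k < m) dotv (ys k) (eta i k) + \sum_(j < s) mu i j * v j <= b i) /\
     (forall i, x *m (h i)^T =
                \sum_(k < m) xs k *m (eta i k)^T + \sum_(j < s) mu i j *: (V j)^T) /\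
     (forall i j, 0 <= mu i j)].

Definition argmin_on (T : Type) (F : set T) (f : T -> R) : set T :=
  [set z | F z /\ forall z', F z' -> f z <= f z'].

(* optimal value (infimum in the extended reals; +oo if infeasible) *)
Definition optval (T : Type) (F : set T) (f : T -> R) : \bar R :=
  ereal_inf [set (f z)%:E | z in F].

End Defs.

(* For fixed x and i, the robust constraint "h_i^T A x <= b_i for all A in U_m" is a linear
   inequality in the matrix A implied by the linear system defining U_m, which is nonempty
   since it contains A_star.  By the affine Farkas lemma (obtained from the homogeneous one,
   which is proved by a Fourier-Motzkin style induction on the number of generators), such
   an implication holds exactly when, for the trace pairing <A, B> = tr (A^T B), the normal
   h_i x^T is a combination of the constraint normals V_j (with weights mu_j >= 0) and
   e_t x_k^T (e_t the standard basis vectors, with free weights forming the entries of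
   eta_k) whose right-hand side combination is at most b_i; this is the system (Q).  Optimal values and optimal sets then
   transfer along the projection onto x. *)

From HB Require Import structures.
From mathcomp Require Import all_boot all_order all_algebra ring lra.
From mathcomp Require Import all_classical all_reals all_analysis.
Import Order.TTheory GRing.Theory Num.Theory.
Local Open Scope ring_scope.
Local Open Scope classical_set_scope.

Definition cone {R : numDomainType} {V : lmodType R} {I : finType} (c : I -> V) : set V :=
  [set d | exists2 lam : I -> R, (forall l, 0 <= lam l) & d = \sum_l lam l *: c l].

Lemma lift_max_widen {p} (i : 'I_p) : lift ord_max i = widen_ord (leqnSn p) i.
Proof. by apply: val_inj; apply: lift_max. Qed.

Lemma ord_recr_ind {p} (P : 'I_p.+1 -> Prop) :
  (forall i, P (widen_ord (leqnSn p) i)) -> P ord_max -> forall l, P l.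
Proof.
by move=> Pwiden Pmax l; case: (unliftP ord_max l) => [i ->|->] //; rewrite lift_max_widen.
Qed.

Lemma cone_recr {R : numDomainType} {V : lmodType R} {p} (c : 'I_p.+1 -> V)
    (lam : 'I_p -> R) t :
  (forall i, 0 <= lam i) -> 0 <= t ->
  cone c (\sum_i lam i *: c (widen_ord (leqnSn p) i) + t *: c ord_max).
Proof.
move=> lam_ge0 t_ge0; exists (fun l => oapp lam t (unlift ord_max l)).
  apply: ord_recr_ind => [i|]; last by rewrite unlift_none.
  by rewrite -lift_max_widen liftK /=.
rewrite big_ord_recr /= unlift_none; congr (_ + _).
by apply: eq_bigr => i _; rewrite -lift_max_widen liftK.
Qed.

Section Farkas.
Context {R : realFieldType} {V : lmodType R} {pr : V -> V -> R}.
Hypothesis prDl : forall a u u' w, pr (a *: u + u') w = a * pr u w + pr u' w.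
Hypothesis prDr : forall a u u' w, pr w (a *: u + u') = a * pr w u + pr w u'.
Hypothesis pr_sep : forall d, d != 0 -> exists w, 0 < pr d w.

Lemma pr0l w : pr 0 w = 0.
Proof. by have := prDl 1 0 0 w; rewrite scale1r addr0 mul1r; lra. Qed.

Lemma prZr a u w : pr u (a *: w) = a * pr u w.
Proof.
have pr0r : pr u 0 = 0 by have := prDr 1 0 0 u; rewrite scale1r addr0 mul1r; lra.
by rewrite -[a *: w]addr0 prDr pr0r addr0.
Qed.

Lemma prBl a u u' w : pr (u - a *: u') w = pr u w - a * pr u' w.
Proof. by rewrite addrC -scaleNr prDl mulNr addrC. Qed.

Lemma prBr a u w w' : pr u (w - a *: w') = pr u w - a * pr u w'.
Proof. by rewrite addrC -scaleNr prDr mulNr addrC. Qed.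

Lemma prNl u w : pr (- u) w = - pr u w.
Proof. by have := prBl 1 0 u w; rewrite sub0r scale1r pr0l mul1r sub0r. Qed.

Lemma farkas_ord p (c : 'I_p -> V) d :
  ~ cone c d -> exists w, (forall l, pr (c l) w <= 0) /\ 0 < pr d w.
Proof.
elim: p c d => [|p IH] c d dNc.
  have d_neq0 : d != 0.
    by apply: contra_notN dNc => /eqP ->; exists (fun=> 0); rewrite ?big_ord0.
  by have [w dw] := pr_sep _ d_neq0; exists w; split=> // -[].
pose c' i := c (widen_ord (leqnSn p) i); pose cl := c ord_max.
have dNc' : ~ cone c' d.
  move=> [lam lam_ge0 dE]; apply: dNc.
  by have := cone_recr c lam 0 lam_ge0 (lexx 0); rewrite scale0r addr0 dE.
have [w [c'w dw]] := IH c' d dNc'.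
have [clw_le0|clw_gt0] := lerP (pr cl w) 0.
  by exists w; split=> //; apply: ord_recr_ind.
(* Project along [cl] onto the hyperplane [pr _ w = 0] and recurse. *)
pose proj u := u - (pr u w / pr cl w) *: cl.
have dNc'' : ~ cone (proj \o c') (proj d).
  move=> [lam lam_ge0 dE]; apply: dNc.
  pose t := pr d w / pr cl w - \sum_i lam i * (pr (c' i) w / pr cl w).
  have -> : d = \sum_i lam i *: c' i + t *: cl.
    rewrite -[LHS](subrK ((pr d w / pr cl w) *: cl)) -/(proj d) dE /t scalerBl.
    rewrite [RHS]addrCA [RHS]addrC; congr (_ + _); rewrite scaler_suml -sumrB.
    by apply: eq_bigr => i _; rewrite /= scalerBr scalerA.
  apply: cone_recr => //; rewrite subr_ge0; apply: (@le_trans _ _ 0).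
    apply: sumr_le0 => i _; apply: mulr_ge0_le0 => //.
    by apply: mulr_le0_ge0; [apply: c'w | rewrite invr_ge0 ltW].
  exact/ltW/divr_gt0.
have [w' [c''w' dw']] := IH _ _ dNc''.
pose w'' := w' - (pr cl w' / pr cl w) *: w.
have pr_w'' u : pr u w'' = pr (proj u) w' by rewrite prBr prBl; ring.
have proj_cl : proj cl = 0 by rewrite /proj divff ?gt_eqF // scale1r subrr.
exists w''; split; last by rewrite pr_w''.
by apply: ord_recr_ind => [i|]; rewrite pr_w'' ?proj_cl ?pr0l //; apply: c''w'.
Qed.

Lemma farkas (I : finType) (c : I -> V) d :
  ~ cone c d -> exists w, (forall l, pr (c l) w <= 0) /\ 0 < pr d w.
Proof.
move=> dNc; have [|w [cw dw]] := @farkas_ord #|I| (fun i => c (enum_val i)) d.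
  move=> [lam lam_ge0 dE]; apply: dNc; exists (lam \o enum_rank) => [l|]; first exact: lam_ge0.
  rewrite dE (reindex _ (onW_bij _ (@enum_val_bij I))) /=.
  by apply: eq_bigr => i _; rewrite enum_valK.
by exists w; split=> // l; rewrite -(enum_rankK l); apply: cw.
Qed.

End Farkas.

Section AffineFarkas.
Context {R : realFieldType} {V : lmodType R} {pr : V -> V -> R}.
Hypothesis prDl : forall a u u' w, pr (a *: u + u') w = a * pr u w + pr u' w.
Hypothesis prDr : forall a u u' w, pr w (a *: u + u') = a * pr w u + pr w u'.
Hypothesis pr_sep : forall d, d != 0 -> exists w, 0 < pr d w.

Let prx (u w : V * R^o) : R := pr u.1 w.1 + u.2 * w.2.

Let prxDl a u u' w : prx (a *: u + u') w = a * prx u w + prx u' w.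
Proof. by rewrite /prx /= prDl -[a *: u.2]/(a * u.2); ring. Qed.

Let prxDr a u u' w : prx w (a *: u + u') = a * prx w u + prx w u'.
Proof. by rewrite /prx /= prDr -[a *: u.2]/(a * u.2); ring. Qed.

Let prx_sep d : d != 0 -> exists w, 0 < prx d w.
Proof.
case: d => u t d_neq0; have [u0|u_neq0] := eqVneq u 0.
  have t_neq0 : t != 0 by apply: contraNneq d_neq0 => t0; rewrite u0 t0.
  by exists (0, t); rewrite /prx /= u0 (pr0l prDl) add0r -expr2 exprn_even_gt0.
have [w uw] := pr_sep _ u_neq0.
by exists (w, 0); rewrite /prx /= mulr0 addr0.
Qed.

Lemma farkas_affine {I : finType} (a : I -> V) (al : I -> R) (g : V) (be : R) z0 :
  (forall l, pr (a l) z0 <= al l) ->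
  (forall z, (forall l, pr (a l) z <= al l) -> pr g z <= be) ->
  exists lam : I -> R,
    [/\ forall l, 0 <= lam l, g = \sum_l lam l *: a l & \sum_l lam l * al l <= be].
Proof.
move=> z0_feas implied; apply: contrapT => no_cert.
pose c (l : I + 'I_1) : V * R^o := if l is inl i then (a i, - al i) else (0, -1).
have [[Z t] [cZt gZt]] : exists w, (forall l, prx (c l) w <= 0) /\ 0 < prx (g, - be) w.
  apply: (farkas prxDl prxDr prx_sep) => -[lam lam_ge0 gE]; apply: no_cert.
  exists (fun i => lam (inl i)); split => //.
  have := congr1 fst gE; rewrite raddf_sum big_sumType big_ord1 /= scaler0 addr0 => ->.
  split=> //.
  have be_eq : - be = - \sum_i lam (inl i) * al i - lam (inr ord0).
    move: (congr1 snd gE) => /= ->; rewrite raddf_sum big_sumType big_ord1 -sumrN.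
    by congr (_ + _); [apply: eq_bigr => i _; apply: mulrN | apply: mulrN1].
  have := lam_ge0 (inr ord0); lra.
have aZ i : pr (a i) Z <= al i * t by have := cZt (inl i); rewrite /prx /=; lra.
have gZ : be * t < pr g Z by move: gZt; rewrite /prx /=; lra.
have : 0 <= t by have := cZt (inr ord0); rewrite /prx /= (pr0l prDl); lra.
rewrite le_eqVlt => /predU1P [t0 | t_gt0]; last first.
  (* [Z / t] satisfies the constraints but violates the implied inequality. *)
  have Zt_feas i : pr (a i) (t^-1 *: Z) <= al i.
    by rewrite (prZr prDr) mulrC ler_pdivrMr.
  by have := implied _ Zt_feas; rewrite (prZr prDr) mulrC ler_pdivrMr //; lra.
(* [Z] is a recession direction along which [pr g] increases without bound. *)
rewrite -t0 in aZ gZ; rewrite mulr0 in gZ.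
pose s := (be - pr g z0 + 1) / pr g Z.
have s_ge0 : 0 <= s by rewrite divr_ge0 ?ltW //; have := implied z0 z0_feas; lra.
have sZ_feas i : pr (a i) (s *: Z + z0) <= al i.
  have := aZ i; rewrite mulr0 prDr => /(mulr_ge0_le0 s_ge0).
  by have := z0_feas i; lra.
by have := implied _ sZ_feas; rewrite prDr /s divfK ?gt_eqF //; lra.
Qed.

Lemma farkas_affine_eq {I J : finType} (a : I -> V) (al : I -> R)
    (e : J -> V) (ep : J -> R) (g : V) (be : R) z0 :
  (forall l, pr (a l) z0 <= al l) -> (forall q, pr (e q) z0 = ep q) ->
  (forall z, (forall l, pr (a l) z <= al l) -> (forall q, pr (e q) z = ep q) ->
     pr g z <= be) ->
  exists lam : I -> R, exists nu : J -> R,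
    [/\ forall l, 0 <= lam l, g = \sum_l lam l *: a l + \sum_q nu q *: e q
      & \sum_l lam l * al l + \sum_q nu q * ep q <= be].
Proof.
move=> z0_le z0_eq implied.
pose a' (l : I + (J + J)) := match l with
  | inl i => a i | inr (inl q) => e q | inr (inr q) => - e q end.
pose al' (l : I + (J + J)) := match l with
  | inl i => al i | inr (inl q) => ep q | inr (inr q) => - ep q end.
have [[i|[q|q]] /=|z z_le|lam [lam_ge0 gE cert]] := farkas_affine a' al' g be z0.
- exact: z0_le.
- by rewrite z0_eq.
- by rewrite (prNl prDl) z0_eq.
- apply: implied => [i|q]; first exact: (z_le (inl i)).
  apply/le_anti; rewrite (z_le (inr (inl q))) -lerN2 -(prNl prDl).
  exact: (z_le (inr (inr q))).
exists (fun i => lam (inl i)), (fun q => lam (inr (inl q)) - lam (inr (inr q))).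
split=> //.
  rewrite gE !big_sumType /=; congr (_ + _); rewrite -big_split /=.
  by apply: eq_bigr => q _; rewrite scalerBl scalerN.
have nu_ep : \sum_q (lam (inr (inl q)) - lam (inr (inr q))) * ep q
    = \sum_q (lam (inr (inl q)) * ep q + lam (inr (inr q)) * - ep q).
  by apply: eq_bigr => q _; rewrite mulrBl mulrN.
by rewrite nu_ep big_split; move: cert; rewrite !big_sumType.
Qed.

End AffineFarkas.

Section TracePairing.
Context {R : comPzRingType} {n : nat}.

Definition trdot (A B : 'M[R]_n) : R := \tr (A^T *m B).

Lemma trdotDl a A A' B : trdot (a *: A + A') B = a * trdot A B + trdot A' B.
Proof. by rewrite /trdot linearD linearZ /= mulmxDl -scalemxAl mxtraceD mxtraceZ. Qed.

Lemma trdotDr a B B' A : trdot A (a *: B + B') = a * trdot A B + trdot A B'.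
Proof. by rewrite /trdot mulmxDr -scalemxAr mxtraceD mxtraceZ. Qed.

Lemma mxtrace_mul_delta (B : 'M[R]_n) i j : \tr (B *m delta_mx i j) = B j i.
Proof.
rewrite -(@mul_delta_mx _ n 1 n 0) mulmxA mxtrace_mulC mulmxA trace_mx11 -rowE -colE.
by rewrite !mxE.
Qed.

End TracePairing.

Lemma trdot_sep {R : realDomainType} {n} (A : 'M[R]_n) : A != 0 -> exists B, 0 < trdot A B.
Proof.
move=> A_neq0; have /existsP [i /existsP [j Aij]] : [exists i, exists j, A i j != 0].
  apply: contraNT A_neq0 => /existsPn A0; apply/eqP/matrixP => i j.
  by have /existsPn/(_ j)/negPn/eqP -> := A0 i; rewrite mxE.
exists (A i j *: delta_mx i j).
by rewrite /trdot -scalemxAr mxtraceZ mxtrace_mul_delta mxE -expr2 exprn_even_gt0.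
Qed.

Section RobustConstraint.
Context {R : realType} {n : nat}.

Lemma dotvC (u w : 'cV[R]_n) : dotv u w = dotv w u.
Proof. by rewrite /dotv -[w^T *m u]trmxK trmx_mul trmxK [RHS]mxE. Qed.

Lemma dotv_mulmx (u x : 'cV[R]_n) (A : 'M[R]_n) :
  dotv u (A *m x) = \tr (x *m u^T *m A).
Proof. by rewrite /dotv -trace_mx11 mulmxA mxtrace_mulC mulmxA. Qed.

Lemma trdot_outer (u x : 'cV[R]_n) (A : 'M[R]_n) :
  trdot (u *m x^T) A = dotv u (A *m x).
Proof. by rewrite dotv_mulmx /trdot trmx_mul trmxK. Qed.

Lemma dotv_delta (t : 'I_n) (w : 'cV[R]_n) : dotv (delta_mx t 0) w = w t 0.
Proof. by rewrite /dotv trmx_delta -rowE mxE. Qed.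

Lemma dotv_sum_delta (y : 'cV[R]_n) (f : 'I_n -> R) :
  dotv y (\sum_t f t *: delta_mx t 0) = \sum_t f t * y t 0.
Proof.
rewrite /dotv mulmx_sumr summxE; apply: eq_bigr => t _.
by rewrite -scalemxAr mxE -colE !mxE.
Qed.

Context {s m : nat} {V : 'I_s -> 'M[R]_n} {v : 'I_s -> R} {xs ys : 'I_m -> 'cV[R]_n}.

Lemma robust_le_certificate {x u : 'cV[R]_n} {be : R} {A0 : 'M[R]_n} :
  Um_set V v xs ys A0 ->
  (forall A, Um_set V v xs ys A -> dotv u (A *m x) <= be) ->
  exists mu : 'I_s -> R, exists eta : 'I_m -> 'cV[R]_n,
    [/\ forall j, 0 <= mu j,
        \sum_k dotv (ys k) (eta k) + \sum_j mu j * v j <= be &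
        x *m u^T = \sum_k xs k *m (eta k)^T + \sum_j mu j *: (V j)^T].
Proof.
move=> [A0_U0 A0_xs] robust.
(* [A *m xs k = ys k] is the family of linear equations [trdot (e (k, t)) A = ys k t 0]. *)
pose e (q : 'I_m * 'I_n) := delta_mx q.2 0 *m (xs q.1)^T.
have trdot_e q A : trdot (e q) A = (A *m xs q.1) q.2 0.
  by rewrite trdot_outer dotv_delta.
have [j|q|A A_U0 A_xs|mu [nu [mu_ge0 uxE cert]]] :=
  farkas_affine_eq trdotDl trdotDr trdot_sep V v e (fun q => ys q.1 q.2 0)
    (u *m x^T) be A0.
- exact: A0_U0.
- by rewrite trdot_e A0_xs.
- rewrite trdot_outer; apply: robust; split=> // k; apply/matrixP => t j.
  by rewrite (ord1 j); have := A_xs (k, t); rewrite trdot_e.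
pose eta k := \sum_t nu (k, t) *: (delta_mx t 0 : 'cV[R]_n).
exists mu, eta; split=> //.
  have -> : \sum_k dotv (ys k) (eta k) = \sum_q nu q * ys q.1 q.2 0.
    rewrite (eq_bigr _ (fun k _ => dotv_sum_delta _ _)) pair_bigA.
    by apply: eq_bigr => -[k t].
  by rewrite addrC.
have -> : x *m u^T = (u *m x^T)^T by rewrite trmx_mul trmxK.
rewrite uxE linearD !linear_sum /= addrC; congr (_ + _); last first.
  by apply: eq_bigr => j _; rewrite linearZ.
transitivity (\sum_k \sum_t (nu (k, t) *: e (k, t))^T).
  by rewrite pair_bigA; apply: eq_bigr => -[k t].
apply: eq_bigr => k _; rewrite linear_sum mulmx_sumr; apply: eq_bigr => t _.
by rewrite !linearZ /= trmx_mul trmxK trmx_delta.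
Qed.

Context {r : nat} {h : 'I_r -> 'cV[R]_n} {b : 'I_r -> R}.

Lemma feasQ_proj_sub : fst @` feasQ h b V v xs ys `<=` feasP h b V v xs ys.
Proof.
move=> _ [[x [mu eta]] [x_S [cert [xhE mu_ge0]]] <-]; split=> // A [A_U0 A_xs] i /=.
rewrite dotv_mulmx xhE mulmxDl mxtraceD !mulmx_suml !raddf_sum /=.
apply: le_trans (cert i); apply: lerD.
  by apply: ler_sum => k _; rewrite -dotv_mulmx A_xs dotvC.
by apply: ler_sum => j _; rewrite -scalemxAl mxtraceZ ler_wpM2l.
Qed.

Lemma feasP_sub_proj {A0 : 'M[R]_n} :
  Um_set V v xs ys A0 -> feasP h b V v xs ys `<=` fst @` feasQ h b V v xs ys.
Proof.
move=> A0_Um x [x_S robust].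
have /choice [cert certP] : forall i, exists p : ('I_s -> R) * ('I_m -> 'cV[R]_n),
    [/\ forall j, 0 <= p.1 j,
        \sum_k dotv (ys k) (p.2 k) + \sum_j p.1 j * v j <= b i &
        x *m (h i)^T = \sum_k xs k *m (p.2 k)^T + \sum_j p.1 j *: (V j)^T].
  move=> i; have [mu [eta mu_eta]] :=
    robust_le_certificate A0_Um (fun A A_Um => robust A A_Um i).
  by exists (mu, eta).
exists (x, (fun i => (cert i).1, fun i => (cert i).2)) => //.
split=> //; split=> [i|]; [|split=> [i|i j]]; by have /= [] := certP i.
Qed.

Lemma feasP_eq_proj {A0 : 'M[R]_n} :
  Um_set V v xs ys A0 -> feasP h b V v xs ys = fst @` feasQ h b V v xs ys.
Proof.
by move=> A0_Um; apply/seteqP; split; [apply: feasP_sub_proj A0_Um | apply: feasQ_proj_sub].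
Qed.

End RobustConstraint.

Lemma optval_image (R : realType) (T U : Type) (p : T -> U) (F : set T) (f : U -> R) :
  optval (p @` F) f = optval F (f \o p).
Proof. by rewrite /optval image_comp. Qed.

Lemma argmin_on_image (R : realType) (T U : Type) (p : T -> U) (F : set T) (f : U -> R) :
  argmin_on (p @` F) f = p @` argmin_on F (f \o p).
Proof.
apply/seteqP; split=> [_ [[z Fz <-] zmin]|_ [z [Fz zmin] <-]].
  by exists z => //; split=> // z' Fz'; apply: zmin; exists z'.
by split=> [|_ [z' Fz' <-]]; [exists z | apply: zmin].
Qed.

Theorem theorem1 (R : realType) (n r s m : nat)
  (h : 'I_r -> 'cV[R]_n) (b : 'I_r -> R)
  (V : 'I_s -> 'M[R]_n) (v : 'I_s -> R)
  (Astar : 'M[R]_n) (xs ys : 'I_m -> 'cV[R]_n) (c : 'cV[R]_n) :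
  U0_set V v Astar ->
  (forall k, ys k = Astar *m xs k) ->
  feasP h b V v xs ys = fst @` feasQ h b V v xs ys /\
  optval (feasP h b V v xs ys) (dotv c) =
    optval (feasQ h b V v xs ys) (fun z => dotv c z.1) /\
  argmin_on (feasP h b V v xs ys) (dotv c) =
    fst @` argmin_on (feasQ h b V v xs ys) (fun z => dotv c z.1).
Proof.
move=> Astar_U0 ysE.
have Astar_Um : Um_set V v xs ys Astar by split=> // k; rewrite ysE.
by rewrite (feasP_eq_proj Astar_Um) optval_image argmin_on_image.
Qed.
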